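(* $\mathfrak{b}_{\mathrm{game}}^{\mathrm{I}} = \mathfrak{b}$, where $\mathfrak{b}$ is the bounding number.
   Context: For $x,y\in\omega^\omega$, $x\le^* y$ means $x(n)\le y(n)$ for all but finitely many $n$. $\mathfrak{b}$ is the least size of a family $\mathcal{A}\subseteq\omega^\omega$ such that no single $x\in\omega^\omega$ satisfies $y\le^* x$ for all $y\in\mathcal{A}$. For $\mathcal{A}\subseteq\omega^\omega$, the bounding game with respect to $\mathcal{A}$ is the infinite two-player game in which, at round $k$, Player I plays $n_k\in\omega$ and then Player II plays $i_k\in\{0,1\}$. Player II wins iff $i_k=1$ for infinitely many $k$ and there is $g\in\mathcal{A}$ with $\{k\in\omega: i_k=1\}=\{k\in\omega: n_k<g(k)\}$. $\mathfrak{b}_{\mathrm{game}}^{\mathrm{I}}$ is the least $|\mathcal{A}|$ such that Player I has no winning strategy in the bounding game with respect to $\mathcal{A}$. *)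

From mathcomp Require Import all_boot.
From mathcomp Require Import boolp classical_sets cardinality.
Set Implicit Arguments. Unset Strict Implicit. Unset Printing Implicit Defensive.
Local Open Scope classical_set_scope.

Definition le_star (x y : nat -> nat) : Prop :=
  exists N, forall n, N <= n -> x n <= y n.

Definition unbounded (A : set (nat -> nat)) : Prop :=
  ~ (exists x : nat -> nat, forall y, A y -> le_star y x).

(* A strategy for Player I maps the history of the play so far
   [(n_0,i_0); ...; (n_{k-1},i_{k-1})] to Player I's next move n_k. *)
Definition strategyI := seq (nat * bool) -> nat.

Fixpoint history (sigma : strategyI) (i : nat -> bool) (k : nat)
  : seq (nat * bool) :=
  match k with
  | 0 => [::]
  | k'.+1 => rcons (history sigma i k') (sigma (history sigma i k'), i k')
  end.

Definition movesI (sigma : strategyI) (i : nat -> bool) (k : nat) : nat :=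
  sigma (history sigma i k).

Definition II_wins (A : set (nat -> nat)) (n : nat -> nat) (i : nat -> bool)
  : Prop :=
  (forall m, exists k, m <= k /\ i k = true) /\
  (exists g, A g /\ forall k, i k = (n k < g k)).

Definition winningI (A : set (nat -> nat)) (sigma : strategyI) : Prop :=
  forall i : nat -> bool, ~ II_wins A (movesI sigma i) i.

Definition noI_win (A : set (nat -> nat)) : Prop :=
  ~ (exists sigma, winningI A sigma).

From mathcomp Require Import all_boot.
From mathcomp Require Import boolp classical_sets cardinality.
From Stdlib Require Import Classical.
Local Open Scope classical_set_scope.
Local Open Scope card_scope.

(* In fact the two least cardinalities are attained by the
   same families: Player I has no winning strategy in the bounding game
   with respect to A exactly when A is unbounded.
   - If A is unbounded and sigma is a strategy for I, then the finitely many
     histories of length k consistent with sigma give a bound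
     [move_bound sigma k] on I's k-th move whatever II does.  Since A is
     unbounded, some g in A exceeds this bound infinitely often; if II
     answers "n_k < g k" truthfully at each round, she wins with witness g.
   - If x dominates every member of A, the strategy "play x k at round k"
     wins for I: any g in A satisfies g k <= x k from some point on, so II
     can only answer 1 finitely often.
   With these two facts, each half of the theorem is witnessed by the
   family itself. *)

Fixpoint histories (sigma : strategyI) (k : nat) : seq (seq (nat * bool)) :=
  match k with
  | 0 => [:: [::]]
  | k'.+1 => flatten [seq [:: rcons h (sigma h, false); rcons h (sigma h, true)]
                     | h <- histories sigma k']
  end.

Lemma history_in_histories sigma i k : history sigma i k \in histories sigma k.
Proof.
elim: k => [|k IH] /=; first by rewrite inE.
set h := history sigma i k.
apply/flattenP; exists [:: rcons h (sigma h, false); rcons h (sigma h, true)].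
  by apply/mapP; exists h.
by case: (i k); rewrite !inE eqxx ?orbT.
Qed.

Definition move_bound (sigma : strategyI) (k : nat) : nat :=
  \max_(h <- histories sigma k) sigma h.

Lemma movesI_le_bound sigma i k : movesI sigma i k <= move_bound sigma k.
Proof. exact: leq_bigmax_seq (history_in_histories sigma i k) _. Qed.

Lemma unbounded_exceeds_often A (f : nat -> nat) : unbounded A ->
  exists g, A g /\ forall N, exists n, N <= n /\ f n < g n.
Proof.
move=> unbA; apply: NNPP => noexc; apply: unbA; exists f => y Ay.
apply: NNPP => notle; apply: noexc; exists y; split => // N.
apply: NNPP => noN; apply: notle; exists N => n Nn.
by rewrite leqNgt; apply/negP => fy; apply: noN; exists n.
Qed.

Fixpoint truthful_history (sigma : strategyI) (g : nat -> nat) (k : nat)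
  : seq (nat * bool) :=
  match k with
  | 0 => [::]
  | k'.+1 => let h := truthful_history sigma g k' in
             rcons h (sigma h, sigma h < g k')
  end.

Definition truthful (sigma : strategyI) (g : nat -> nat) (k : nat) : bool :=
  sigma (truthful_history sigma g k) < g k.

Lemma history_truthful sigma g k :
  history sigma (truthful sigma g) k = truthful_history sigma g k.
Proof. by elim: k => [|k IH] //=; rewrite IH. Qed.

Lemma truthfulE sigma g k :
  truthful sigma g k = (movesI sigma (truthful sigma g) k < g k).
Proof. by rewrite /movesI history_truthful. Qed.

Lemma unbounded_noI_win A : unbounded A -> noI_win A.
Proof.
move=> unbA [sigma winning].
have [g [Ag often]] := @unbounded_exceeds_often A (move_bound sigma) unbA.
apply: (winning (truthful sigma g)); split; last first.
  by exists g; split=> // k; exact: truthfulE.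
move=> m; have [n [mn bound_lt]] := often m; exists n; split => //.
by rewrite truthfulE (leq_ltn_trans (movesI_le_bound _ _ n) bound_lt).
Qed.

(* Round k is recoverable from the history as its length. *)
Lemma size_history sigma i k : size (history sigma i k) = k.
Proof. by elim: k => [|k IH] //=; rewrite size_rcons IH. Qed.

Lemma noI_win_unbounded A : noI_win A -> unbounded A.
Proof.
move=> noI [x dom]; apply: noI; exists (fun h => x (size h)).
move=> i [often [g [Ag answers]]].
have [N le_gx] := dom g Ag.
have [k [Nk ik]] := often N.
by move: ik; rewrite answers /movesI size_history ltnNge le_gx.
Qed.

Theorem mainTheorem1 :
  (forall A : set (nat -> nat), unbounded A ->
     exists B : set (nat -> nat), noI_win B /\ (B #<= A)) /\
  (forall B : set (nat -> nat), noI_win B ->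
     exists A : set (nat -> nat), unbounded A /\ (A #<= B)).
Proof.
split.
- move=> A unbA; exists A; split; [exact: unbounded_noI_win | exact: card_lexx].
- move=> B noI; exists B; split; [exact: noI_win_unbounded | exact: card_lexx].
Qed.
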